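(* Let $G\curvearrowright X$ and $H\curvearrowright Y$ be group actions with $\mathrm{Con}(H\curvearrowright Y)\subseteq\mathrm{Con}(G\curvearrowright X)$. Then $\tau(G\curvearrowright X)\le\tau(H\curvearrowright Y)$.
   Context: For an action $G\curvearrowright X$, an ordered tuple $\mathfrak{g}=(g_1,\dots,g_n)$ of elements of $G$ and a finite partition $\mathcal{E}=\{E_1,\dots,E_m\}$ of $X$ (a configuration pair), a configuration is a tuple $C=(C_0,\dots,C_n)\in\{1,\dots,m\}^{n+1}$ such that some $x\in E_{C_0}$ satisfies $g_i\cdot x\in E_{C_i}$ for $i=1,\dots,n$; the set of these is $\mathrm{Con}(\mathfrak{g},\mathcal{E};X)$, and $\mathrm{Con}(G\curvearrowright X)=\{\mathrm{Con}(\mathfrak{g},\mathcal{E};X): (\mathfrak{g},\mathcal{E})\text{ a configuration pair}\}$. A paradoxical decomposition of $G\curvearrowright X$ consists of pairwise disjoint subsets $A_1,\dots,A_n,B_1,\dots,B_m$ of $X$ and elements $g_1,\dots,g_n,h_1,\dots,h_m\in G$ with $X=\bigcup_{i=1}^n g_iA_i=\bigcup_{j=1}^m h_jB_j$. The Tarski number $\tau(G\curvearrowright X)$ is the minimal number of pieces $n+m$ in such a decomposition, and $\infty$ if none exists. *)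

From mathcomp Require Import all_boot.
From Stdlib Require Import ClassicalEpsilon.

Set Implicit Arguments.
Unset Strict Implicit.
Unset Printing Implicit Defensive.

Definition is_group_action (G X : Type) (mul : G -> G -> G) (one : G)
  (inv : G -> G) (act : G -> X -> X) : Prop :=
  [/\ (forall a b c, mul a (mul b c) = mul (mul a b) c),
      (forall a, mul one a = a /\ mul a one = a),
      (forall a, mul (inv a) a = one /\ mul a (inv a) = one),
      (forall x, act one x = x) &
      (forall a b x, act (mul a b) x = act a (act b x))].

(* A finite partition {E_1,...,E_m} of X is encoded by the labelling
   E : X -> 'I_m (x lies in the piece E x); pieces are nonempty. *)
Definition is_partition (X : Type) (m : nat) (E : X -> 'I_m) : Prop :=
  forall k : 'I_m, exists x, E x = k.

Definition is_configuration (G X : Type) (act : G -> X -> X) (n m : nat)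
  (g : 'I_n -> G) (E : X -> 'I_m) (C : {ffun 'I_n.+1 -> 'I_m}) : Prop :=
  exists x : X, C ord0 = E x /\ forall i : 'I_n, C (lift ord0 i) = E (act (g i) x).

(* Con(H ~> Y) is a subset of Con(G ~> X): every set Con(h,F;Y) (a subset of
   {1..m}^{n+1}) equals some Con(g,E;X). *)
Definition Con_subset (H Y G X : Type) (actH : H -> Y -> Y) (actG : G -> X -> X)
  : Prop :=
  forall (n m : nat) (h : 'I_n -> H) (F : Y -> 'I_m), is_partition F ->
    exists (g : 'I_n -> G) (E : X -> 'I_m), is_partition E /\
      forall C : {ffun 'I_n.+1 -> 'I_m},
        is_configuration actH h F C <-> is_configuration actG g E C.

Definition paradoxical_decomposition (G X : Type) (act : G -> X -> X)
  (n m : nat) (A : 'I_n -> X -> Prop) (B : 'I_m -> X -> Prop)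
  (g : 'I_n -> G) (h : 'I_m -> G) : Prop :=
  [/\ (forall i i' x, A i x -> A i' x -> i = i'),
      (forall j j' x, B j x -> B j' x -> j = j'),
      (forall i j x, A i x -> B j x -> False),
      (forall x, exists i, exists2 a, A i a & act (g i) a = x) &
      (forall x, exists j, exists2 b, B j b & act (h j) b = x)].

Definition has_paradoxical_decomposition_with (G X : Type) (act : G -> X -> X)
  (k : nat) : Prop :=
  exists n m A B g h, n + m = k /\ @paradoxical_decomposition G X act n m A B g h.

Definition decb (P : Prop) : bool :=
  if excluded_middle_informative P then true else false.

(* Tarski number: Some k with k minimal, or None standing for infinity. *)
Definition tarski_number (G X : Type) (act : G -> X -> X) : option nat :=
  match excluded_middle_informative
          (exists k, decb (has_paradoxical_decomposition_with act k)) with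
  | left ex => Some (ex_minn ex)
  | right _ => None
  end.

Definition le_ninf (a b : option nat) : bool :=
  match a, b with
  | _, None => true
  | None, Some _ => false
  | Some x, Some y => x <= y
  end.

From mathcomp Require Import all_boot.
From Stdlib Require Import ClassicalEpsilon.

(* Colour each point of Y by the piece of a paradoxical decomposition of
   H ~> Y containing it (or by "no piece"): a finite partition F of Y.  Feed
   F and the inverses of the translating elements to Con(H ~> Y) ⊆ Con(G ~> X)
   to get a partition E of X and elements g'_l of G with the same
   configurations, and colour X through E.  For x in X, the configuration of
   x is realised by some y, and y = g_l a with a in the l-th piece; hence
   g_l^-1 y, and so g'_l x, carry colour l, i.e. x lies in g'_l^-1 of the
   l-th piece of X.  The decomposition transfers with the same pieces. *)

Lemma decbP (P : Prop) : reflect P (decb P).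
Proof. by rewrite /decb; case: excluded_middle_informative => ?; constructor. Qed.

Lemma act_invK {G X : Type} {mul : G -> G -> G} {one : G} {inv : G -> G}
    {act : G -> X -> X} :
  is_group_action mul one inv act -> forall a, cancel (act a) (act (inv a)).
Proof. by case=> _ _ mulVg act1 actM a x; rewrite -actM (proj1 (mulVg a)) act1. Qed.

Definition translates_cover {G X I : Type} (act : G -> X -> X)
    (A : I -> X -> Prop) (g : I -> G) : Prop :=
  forall x, exists i, exists2 a, A i a & act (g i) a = x.

Section Translates.

Context {G X I : Type} {inv : G -> G} {act : G -> X -> X}.
Hypothesis act_invK : forall a, cancel (act a) (act (inv a)).
Context {A : I -> X -> Prop} {g : I -> G}.

Lemma translates_cover_inv :
  translates_cover act A g -> forall x, exists i, A i (act (inv (g i)) x).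
Proof. by move=> cover x; have [i [a Aa <-]] := cover x; exists i; rewrite act_invK. Qed.

Lemma inv_translates_cover :
  (forall x, exists i, A i (act (g i) x)) ->
  translates_cover act A (fun i => inv (g i)).
Proof.
move=> cover x; have [i Ai] := cover x; exists i; exists (act (g i) x) => //.
exact: act_invK.
Qed.

End Translates.

Definition configuration_at {G X : Type} (act : G -> X -> X) {n m : nat}
    (g : 'I_n -> G) (E : X -> 'I_m) (x : X) : {ffun 'I_n.+1 -> 'I_m} :=
  [ffun t => if unlift ord0 t is Some l then E (act (g l) x) else E x].

Lemma configuration_atP {G X : Type} (act : G -> X -> X) {n m : nat}
    (g : 'I_n -> G) (E : X -> 'I_m) (x : X) :
  is_configuration act g E (configuration_at act g E x).
Proof.
exists x; split; first by rewrite ffunE unlift_none.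
by move=> l; rewrite ffunE liftK.
Qed.

Lemma configuration_cover_transfer {G X H Y : Type} {actG : G -> X -> X}
    {actH : H -> Y -> Y} {N q k : nat} {g : 'I_N -> G} {E : X -> 'I_q}
    {h : 'I_N -> H} {F : Y -> 'I_q} {idx : 'I_k -> 'I_N}
    {R : 'I_k -> 'I_q -> Prop} :
  (forall C, is_configuration actG g E C -> is_configuration actH h F C) ->
  (forall y, exists i, R i (F (actH (h (idx i)) y))) ->
  forall x, exists i, R i (E (actG (g (idx i)) x)).
Proof.
move=> subCon coverY x.
have [y [_ Cy]] := subCon _ (configuration_atP actG g E x).
have [i Ri] := coverY y; exists i.
by have := Cy (idx i); rewrite ffunE liftK => ->.
Qed.

Lemma disjoint_family_label {I Y : Type} {P : I -> Y -> Prop} :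
  (forall i j y, P i y -> P j y -> i = j) ->
  exists label : Y -> option I, forall i y, P i y <-> label y = Some i.
Proof.
move=> disjP.
exists (fun y => match excluded_middle_informative (exists i, P i y) with
  | left ex => Some (proj1_sig (constructive_indefinite_description _ ex))
  | right _ => None end) => i y.
case: excluded_middle_informative => [ex|noP]; last first.
  by split=> // Pi; case: noP; exists i.
case: (constructive_indefinite_description _ ex) => j Pj /=.
by split=> [Pi | [<-]] //; rewrite (disjP _ _ _ Pj Pi).
Qed.

Lemma factor_through_partition {Y : Type} {T : finType} (f : Y -> T) :
  exists q (F : Y -> 'I_q) (e : 'I_q -> T),
    is_partition F /\ forall y, e (F y) = f y.
Proof.
pose S := [set t : T | decb (exists y, f y = t)].
have fS y : f y \in S by rewrite inE; apply/decbP; exists y.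
exists #|S|, (fun y => enum_rank_in (fS y) (f y)), enum_val; split.
- move=> k; have := enum_valP k; rewrite inE => /decbP [y fy].
  by exists y; move: (fS y); rewrite fy => Sy; apply: enum_valK_in.
- by move=> y; apply: enum_rankK_in.
Qed.

Section ColouredTransfer.

Context {G X H Y : Type} {invG : G -> G} {actG : G -> X -> X}
  {invH : H -> H} {actH : H -> Y -> Y}.
Hypotheses (actG_invK : forall a, cancel (actG a) (actG (invG a)))
  (actH_invK : forall a, cancel (actH a) (actH (invH a))).

Context {n m q : nat} {P : 'I_n + 'I_m -> Y -> Prop} {w : 'I_n + 'I_m -> H}.
Context {F : Y -> 'I_q} {colour : 'I_q -> option ('I_n + 'I_m)}.
Hypothesis colourP : forall s y, P s y <-> colour (F y) = Some s.
Context {g : 'I_(n + m) -> G} {E : X -> 'I_q}.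
Hypothesis ConGH : forall C, is_configuration actG g E C ->
  is_configuration actH (fun l => invH (w (split l))) F C.

Lemma coloured_cover_transfer {k : nat} {idx : 'I_k -> 'I_(n + m)}
    {side : 'I_k -> 'I_n + 'I_m} :
  (forall i, split (idx i) = side i) ->
  translates_cover actH (fun i => P (side i)) (fun i => w (side i)) ->
  translates_cover actG (fun i x => colour (E x) = Some (side i))
    (fun i => invG (g (idx i))).
Proof.
move=> split_idx coverY; apply: (inv_translates_cover (g := fun i => g (idx i)) actG_invK).
apply: (configuration_cover_transfer (R := fun i c => colour c = Some (side i)) ConGH).
move=> y; have [i Pi] := translates_cover_inv actH_invK coverY y.
by exists i; rewrite split_idx; apply/colourP.
Qed.

End ColouredTransfer.

Lemma paradoxical_decomposition_transfer
    (G X : Type) (mulG : G -> G -> G) (oneG : G) (invG : G -> G)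
    (actG : G -> X -> X)
    (H Y : Type) (mulH : H -> H -> H) (oneH : H) (invH : H -> H)
    (actH : H -> Y -> Y) (k : nat) :
  is_group_action mulG oneG invG actG ->
  is_group_action mulH oneH invH actH ->
  Con_subset actH actG ->
  has_paradoxical_decomposition_with actH k ->
  has_paradoxical_decomposition_with actG k.
Proof.
move=> /act_invK actG_invK /act_invK actH_invK ConHG.
move=> [n [m [A [B [g [h [<- [disjA disjB disjAB coverA coverB]]]]]]]].
pose P s := match s with inl i => A i | inr j => B j end.
pose w s := match s with inl i => g i | inr j => h j end.
have disjP s s' y : P s y -> P s' y -> s = s'.
  case: s s' => [i|j] [i'|j'] /= Ps Ps'.
  - by rewrite (disjA _ _ _ Ps Ps').
  - by case: (disjAB _ _ _ Ps Ps').
  - by case: (disjAB _ _ _ Ps' Ps).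
  - by rewrite (disjB _ _ _ Ps Ps').
have [label labelP] := disjoint_family_label disjP.
have [q [F [colour [partF colourF]]]] := factor_through_partition label.
have colourP s y : P s y <-> colour (F y) = Some s by rewrite colourF.
have [g' [E [_ ConE]]] := ConHG _ _ (fun l => invH (w (split l))) F partF.
have ConGH C := proj2 (ConE C).
exists n, m, (fun i x => colour (E x) = Some (inl i)),
  (fun j x => colour (E x) = Some (inr j)),
  (fun i => invG (g' (lshift m i))), (fun j => invG (g' (rshift n j))).
split=> //; split.
- by move=> i i' x -> [].
- by move=> j j' x -> [].
- by move=> i j x ->.
- exact: (coloured_cover_transfer actG_invK actH_invK colourP ConGH
    (fun i => unsplitK (inl i)) coverA).
- exact: (coloured_cover_transfer actG_invK actH_invK colourP ConGH
    (fun j => unsplitK (inr j)) coverB).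
Qed.

Lemma le_tarski_number (G X H Y : Type) (actG : G -> X -> X)
    (actH : H -> Y -> Y) :
  (forall k, has_paradoxical_decomposition_with actH k ->
     has_paradoxical_decomposition_with actG k) ->
  le_ninf (tarski_number actG) (tarski_number actH).
Proof.
move=> transfer; rewrite {2}/tarski_number.
case: excluded_middle_informative => [exH|]; last by case: (tarski_number actG).
case: (ex_minnP exH) => k /decbP decH _.
rewrite /tarski_number; case: excluded_middle_informative => [exG|[]].
  by case: (ex_minnP exG) => k' _ min_k' /=; apply/min_k'/decbP/transfer.
by exists k; apply/decbP/transfer.
Qed.

Theorem mainTheorem6
  (G X : Type) (mulG : G -> G -> G) (oneG : G) (invG : G -> G) (actG : G -> X -> X)
  (H Y : Type) (mulH : H -> H -> H) (oneH : H) (invH : H -> H) (actH : H -> Y -> Y) :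
  is_group_action mulG oneG invG actG ->
  is_group_action mulH oneH invH actH ->
  Con_subset actH actG ->
  le_ninf (tarski_number actG) (tarski_number actH).
Proof.
move=> actionG actionH ConHG; apply: le_tarski_number => k.
exact: paradoxical_decomposition_transfer actionG actionH ConHG.
Qed.
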